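(* Let $p$ be an odd prime, $q\in\mathbb{C}_p$ with $|q-1|_p<1$, $\alpha\in\mathbb{N}\cup\{0\}$, $h\in\mathbb{N}$, and let $n,k$ be nonnegative integers with $n>k$. Then \[ \sum_{l=0}^{n-k}\binom{n-k}{l}(-1)^l\frac{\widetilde{G}_{l+k+1,q}^{(\alpha,h)}}{l+k+1}=\begin{cases}[2]_q+q^{h+1}\dfrac{\widetilde{G}_{n+1,q^{-1}}^{(\alpha,h)}}{n+1} & \text{if } k=0,\\[2mm] \displaystyle\sum_{l=0}^{k}\binom{k}{l}(-1)^{k+l}\Big\{[2]_q+q^{h+1}\frac{\widetilde{G}_{n-l+1,q^{-1}}^{(\alpha,h)}}{n-l+1}\Big\} & \text{if } k\neq 0.\end{cases} \]
   Context: For $x\in\mathbb{Z}_p$ write $[x]_q=\frac{1-q^x}{1-q}$, and $[2]_q=1+q$. For a uniformly differentiable $f:\mathbb{Z}_p\to\mathbb{C}_p$, the fermionic $p$-adic $q$-integral is $\int_{\mathbb{Z}_p}f(\xi)\,d\mu_{-q}(\xi)=\lim_{N\to\infty}\frac{1}{[p^N]_{-q}}\sum_{\xi=0}^{p^N-1}f(\xi)(-q)^{\xi}$, with $[p^N]_{-q}=\frac{1+q^{p^N}}{1+q}$. The $(h,q)$-Genocchi polynomials with weight $\alpha$ are defined for $n\ge0$, $x\in\mathbb{Z}_p$ by $\frac{\widetilde{G}_{n+1,q}^{(\alpha,h)}(x)}{n+1}=\int_{\mathbb{Z}_p}q^{(h-1)\xi}[x+\xi]_{q^{\alpha}}^n\,d\mu_{-q}(\xi)$,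 and the numbers are $\widetilde{G}_{n,q}^{(\alpha,h)}=\widetilde{G}_{n,q}^{(\alpha,h)}(0)$. The numbers $\widetilde{G}_{n,q^{-1}}^{(\alpha,h)}$ are obtained by replacing $q$ by $q^{-1}$ everywhere: $\frac{\widetilde{G}_{n+1,q^{-1}}^{(\alpha,h)}}{n+1}=\int_{\mathbb{Z}_p}q^{(1-h)\xi}[\xi]_{q^{-\alpha}}^n\,d\mu_{-q^{-1}}(\xi)$. *)

From HB Require Import structures.
From mathcomp Require Import all_boot all_order all_algebra.
From mathcomp Require Import reals.
From Stdlib Require Import ClassicalEpsilon.
Set Implicit Arguments. Unset Strict Implicit. Unset Printing Implicit Defensive.
Import Order.TTheory GRing.Theory Num.Theory.
Local Open Scope ring_scope.

(* Abstract model of C_p: an algebraically closed field K of characteristic 0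
   with a complete non-archimedean absolute value |.| : K -> R normalised by
   |p| = 1/p.  (C_p is such a field; there is no C_p in the libraries.) *)
Record padic_abs (K : closedFieldType) (R : realType) (p : nat) (abs : K -> R)
  : Prop := {
  pabs_ge0 : forall x, 0 <= abs x;
  pabs_eq0 : forall x, abs x = 0 <-> x = 0;
  pabs_mul : forall x y, abs (x * y) = abs x * abs y;
  pabs_ultra : forall x y, abs (x + y) <= Num.max (abs x) (abs y);
  pabs_p : abs (p%:R) = (p%:R)^-1;
  pchar0 : forall n : nat, (0 < n)%N -> (n%:R : K) != 0;
  pcomplete : forall u : nat -> K,
    (forall e : R, 0 < e -> exists N, forall m n, (N <= m)%N -> (N <= n)%N ->
        abs (u m - u n) < e) ->
    exists L, forall e : R, 0 < e -> exists N, forall n, (N <= n)%N ->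
        abs (u n - L) < e
}.

Definition cvg_abs (K : fieldType) (R : realType) (abs : K -> R)
  (u : nat -> K) (L : K) : Prop :=
  forall e : R, 0 < e -> exists N, forall n, (N <= n)%N -> abs (u n - L) < e.

(* the limit (chosen by classical choice; it is unique when it exists) *)
Definition lim_abs (K : fieldType) (R : realType) (abs : K -> R)
  (u : nat -> K) : K :=
  epsilon (inhabits 0) (cvg_abs abs u).

Definition qnum (K : fieldType) (q : K) (x : nat) : K :=
  if q == 1 then x%:R else (1 - q ^+ x) / (1 - q).

(* fermionic p-adic q-integral of f (evaluated on integers xi) :
   lim_N 1/[p^N]_{-q} * sum_{xi=0}^{p^N-1} f(xi) (-q)^xi,
   with [p^N]_{-q} = (1 + q^{p^N})/(1+q) *)
Definition fqint (K : fieldType) (R : realType) (abs : K -> R) (p : nat)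
  (q : K) (f : nat -> K) : K :=
  lim_abs abs (fun N => (\sum_(xi < p ^ N) f xi * (- q) ^+ xi)
                          / ((1 + q ^+ (p ^ N)) / (1 + q))).

(* (h,q)-Genocchi numbers with weight alpha:
   G_{m,q}^{(alpha,h)} = m * int q^{(h-1)xi} [xi]_{q^alpha}^{m-1} dmu_{-q}(xi)
   (defined for m >= 1 by the paper; value at m = 0 is irrelevant, here 0). *)
Definition Gtilde (K : fieldType) (R : realType) (abs : K -> R) (p : nat)
  (q : K) (alpha h : nat) (m : nat) : K :=
  m%:R * fqint abs p q
    (fun xi => q ^+ ((h - 1) * xi) * qnum (q ^+ alpha) xi ^+ m.-1).

(* The integrands are the functions x |-> s^x P([x]_Q), P a polynomial.  On
   them the fermionic integral I_r exists and satisfies the shift equation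
   r I_r(f(. + 1)) + I_r(f) = (1 + r) f(0), by telescoping the Riemann sums over
   the odd number p^N of points.  A linear functional on polynomials annihilated
   by the homogeneous equation vanishes: the equation is triangular on the
   monomials, with diagonal entries 1 + r s Q^j that are nonzero because
   |r s Q^j - 1| < 1 while |2| = 1 for odd p.  This uniqueness yields the
   reflection formula
     I_q(P) = (1 + q) P(0) - q I_(q^-1)(P(-q^-alpha X)),
   whose right-hand side satisfies the same shift equation.  For P = (1 - X)^j,
   j > 0, the shift equation of I_(q^-1) turns the right-hand side into
   [2]_q + q^(h+1) I_(q^-1)(X^j).  The theorem follows by integrating
   X^k (1 - X)^(n-k), expanded once in powers of X and once, via
   X = 1 - (1 - X), in powers of 1 - X. *)
From HB Require Import structures.
From mathcomp Require Import all_boot all_order all_algebra.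
From mathcomp Require Import reals.
From mathcomp Require Import ring lra zify.
From Stdlib Require Import ClassicalEpsilon FunctionalExtensionality.
Import Order.TTheory GRing.Theory Num.Theory.
Local Open Scope ring_scope.
Set Implicit Arguments. Unset Strict Implicit. Unset Printing Implicit Defensive.

Lemma bernoulli_ineq (R : realFieldType) (d : R) n :
  0 <= d -> 1 + n%:R * d <= (1 + d) ^+ n.
Proof.
move=> d0; elim: n => [|n IH]; first by rewrite mul0r addr0 expr0.
rewrite exprS -addn1 natrD mulrDl mul1r.
have : 0 <= n%:R * d by rewrite mulr_ge0 ?ler0n.
nra.
Qed.

Lemma exists_expr_lt (R : archiRealFieldType) (c e : R) :
  0 <= c -> c < 1 -> 0 < e -> exists N, c ^+ N < e.
Proof.
move=> c0 c1 e0; have [->|cn0] := eqVneq c 0; first by exists 1%N; rewrite expr1.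
have cp : 0 < c by rewrite lt_def cn0.
pose d := c^-1 - 1.
have dp : 0 < d by rewrite subr_gt0 invf_gt1.
exists (Num.bound ((e * d)^-1)); set N := Num.bound _.
have hN : (e * d)^-1 < N%:R by apply: archi_boundP; rewrite invr_ge0 ltW ?mulr_gt0.
have hN' : 1 < N%:R * (e * d).
  by rewrite -ltr_pdivrMr ?mulr_gt0 // div1r.
have := bernoulli_ineq N (ltW dp).
rewrite (_ : 1 + d = c^-1) ?exprVn; last by rewrite addrC subrK.
set X := c ^+ N => hb.
have X0 : 0 < X by rewrite exprn_gt0.
have XX : X * X^-1 = 1 by rewrite mulfV // gt_eqF.
have : 0 < X^-1 by rewrite invr_gt0.
have : 0 <= N%:R :> R by rewrite ler0n.
nra.
Qed.

Section ShiftAnnihilated.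
Variables (K : idomainType) (F : {poly K} -> K).
Hypothesis F_linear : forall a P P', F (a *: P + P') = a * F P + F P'.
Hypothesis F_ext : forall P P', (forall x, P.[x] = P'.[x]) -> F P = F P'.

Lemma lin_fun0 : F 0 = 0.
Proof.
have := F_linear 1 0 0; rewrite scale1r addr0 mul1r => e.
by apply/eqP; rewrite -(subrr (F 0)) {2}e addrK.
Qed.

Lemma lin_funZ a P : F (a *: P) = a * F P.
Proof. by have := F_linear a P 0; rewrite !addr0 lin_fun0 addr0. Qed.

Lemma lin_fun_sum n (c : 'I_n -> K) (Ps : 'I_n -> {poly K}) :
  F (\sum_(i < n) c i *: Ps i) = \sum_(i < n) c i * F (Ps i).
Proof.
elim: n c Ps => [|n IH] c Ps; first by rewrite !big_ord0 lin_fun0.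
by rewrite !big_ord_recr /= addrC F_linear IH addrC.
Qed.

Lemma lin_fun_comb n (c : 'I_n -> K) (Ps : 'I_n -> {poly K}) P :
  (forall x, P.[x] = \sum_(i < n) c i * (Ps i).[x]) ->
  F P = \sum_(i < n) c i * F (Ps i).
Proof.
move=> hP; rewrite -lin_fun_sum; apply: F_ext => x.
by rewrite hP horner_sum; apply: eq_bigr => i _; rewrite hornerZ.
Qed.

Variables (r s Q : K).
Hypothesis F_shift : forall P, r * F (s *: (P \Po (Q *: 'X + 1))) + F P = 0.
Hypothesis diag_neq0 : forall j, 1 + r * s * Q ^+ j != 0.

Lemma shift_annihilated_monomial j : F 'X^j = 0.
Proof.
elim/ltn_ind: j => j IH.
pose c (i : 'I_j.+1) : K := s * (Q ^+ i * 'C(j, i)%:R).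
have e : F (s *: ('X^j \Po (Q *: 'X + 1))) = \sum_(i < j.+1) c i * F 'X^i.
  apply: lin_fun_comb => x.
  rewrite hornerZ horner_comp hornerXn hornerD hornerZ hornerX hornerC.
  rewrite exprD1n mulr_sumr; apply: eq_bigr => i _.
  by rewrite hornerXn /c exprMn -mulr_natr; ring.
have := F_shift 'X^j; rewrite e big_ord_recr /= big1 ?add0r; last first.
  by move=> i _; rewrite IH ?mulr0.
rewrite /c /= binn mulr1 => e0.
have : (1 + r * s * Q ^+ j) * F 'X^j = 0 by rewrite -e0; ring.
by move/eqP; rewrite mulf_eq0 (negbTE (diag_neq0 j)) => /eqP.
Qed.

Lemma shift_annihilated_eq0 P : F P = 0.
Proof.
rewrite (@lin_fun_comb (size P) (fun i => P`_i) (fun i => 'X^i) P).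
  by apply: big1 => i _; rewrite shift_annihilated_monomial mulr0.
by move=> x; rewrite horner_coef; apply: eq_bigr => i _; rewrite hornerXn.
Qed.

End ShiftAnnihilated.

Lemma qnumE (K : fieldType) (Q : K) x : qnum Q x = \sum_(i < x) Q ^+ i.
Proof.
rewrite /qnum; case: eqP => [->|/eqP Q1].
  by under eq_bigr do rewrite expr1n; rewrite sumr_const card_ord.
have Q1' : 1 - Q != 0 by rewrite subr_eq0 eq_sym.
apply: (mulIf Q1'); rewrite mulfVK // mulrC -[1 - Q ^+ x]opprB subrX1; ring.
Qed.

Lemma qnum0 (K : fieldType) (Q : K) : qnum Q 0 = 0.
Proof. by rewrite qnumE big_ord0. Qed.

Lemma qnumS (K : fieldType) (Q : K) x : qnum Q x.+1 = 1 + Q * qnum Q x.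
Proof.
rewrite !qnumE big_ord_recl expr0 mulr_sumr; congr (_ + _).
by apply: eq_bigr => i _; rewrite exprS.
Qed.

Lemma subrX1_qnum (K : fieldType) (Q : K) x : Q ^+ x - 1 = (Q - 1) * qnum Q x.
Proof. by rewrite qnumE subrX1. Qed.

Section PadicAnalysis.
Variables (K : closedFieldType) (R : realType) (p : nat) (abs : K -> R).
Hypotheses (HK : padic_abs p abs) (Hp : prime p) (Hodd : odd p).

Lemma pabs_eq0P x : (abs x == 0) = (x == 0).
Proof. by have [h1 h2] := pabs_eq0 HK x; apply/eqP/eqP. Qed.

Lemma pabs_gt0 x : (0 < abs x) = (x != 0).
Proof. by rewrite lt_def (pabs_ge0 HK) andbT pabs_eq0P. Qed.

Lemma pabs0 : abs 0 = 0.
Proof. by apply/eqP; rewrite pabs_eq0P. Qed.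

Lemma pabs1 : abs 1 = 1.
Proof.
have h1 : abs 1 != 0 by rewrite pabs_eq0P oner_eq0.
by apply: (mulfI h1); rewrite -(pabs_mul HK) !mulr1.
Qed.

Lemma pabsN1 : abs (-1) = 1.
Proof.
have h := pabs_mul HK (-1) (-1); rewrite mulrNN mulr1 pabs1 in h.
have : (abs (-1) - 1) * (abs (-1) + 1) = 0 by rewrite -subr_sqr_1 expr2 -h subrr.
have : 0 <= abs (-1) by apply: (pabs_ge0 HK).
nra.
Qed.

Lemma pabsN x : abs (- x) = abs x.
Proof. by rewrite -mulN1r (pabs_mul HK) pabsN1 mul1r. Qed.

Lemma pabs_subC x y : abs (x - y) = abs (y - x).
Proof. by rewrite -pabsN opprB. Qed.

Lemma pabsX x n : abs (x ^+ n) = abs x ^+ n.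
Proof. by elim: n => [|n IH]; rewrite ?pabs1 // !exprS (pabs_mul HK) IH. Qed.

Lemma pabsV x : abs x^-1 = (abs x)^-1.
Proof.
have [->|x0] := eqVneq x 0; first by rewrite invr0 pabs0 invr0.
have ax0 : abs x != 0 by rewrite pabs_eq0P.
by apply: (mulfI ax0); rewrite -(pabs_mul HK) !mulfV // pabs1.
Qed.

Lemma pabsD_le x y c : abs x <= c -> abs y <= c -> abs (x + y) <= c.
Proof. by move=> hx hy; apply: le_trans (pabs_ultra HK x y) _; rewrite ge_max hx. Qed.

Lemma pabsD_lt x y c : abs x < c -> abs y < c -> abs (x + y) < c.
Proof. by move=> hx hy; apply: le_lt_trans (pabs_ultra HK x y) _; rewrite gt_max hx. Qed.

Lemma pabsB_lt x y c : abs x < c -> abs y < c -> abs (x - y) < c.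
Proof. by move=> hx hy; apply: pabsD_lt; rewrite ?pabsN. Qed.

Lemma pabs_sum_le (I : Type) (r : seq I) (P : pred I) (F : I -> K) c :
  0 <= c -> (forall i, P i -> abs (F i) <= c) ->
  abs (\sum_(i <- r | P i) F i) <= c.
Proof.
move=> c0 hF; elim/big_ind: _ => //; first by rewrite pabs0.
by move=> x y; apply: pabsD_le.
Qed.

Lemma pabs_natr_le1 n : abs n%:R <= 1.
Proof.
elim: n => [|n IH]; first by rewrite pabs0.
by rewrite -addn1 natrD; apply: pabsD_le; rewrite ?pabs1.
Qed.

Lemma pabs_p_lt1 : abs p%:R < 1.
Proof. by rewrite (pabs_p HK) invf_lt1 ?ltr1n ?ltr0n ?prime_gt1 ?prime_gt0. Qed.

Lemma pabs_isosceles x y : abs (x - y) < abs y -> abs x = abs y.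
Proof.
move=> hxy; apply/eqP; rewrite eq_le; apply/andP; split.
  by rewrite -[x](subrK y); apply: pabsD_le; [exact: ltW | exact: lexx].
have := pabs_ultra HK (y - x) x; rewrite subrK le_max pabs_subC => /orP[h|//].
by have := lt_le_trans hxy h; rewrite ltxx.
Qed.

(* 2 = p - 2m is a unit because p is odd and |p| < 1. *)
Lemma pabs2 : abs 2 = 1.
Proof.
have [m hm] : exists m, p = (2 * m).+1.
  by exists p./2; rewrite -{1}(odd_double_half p) Hodd -mul2n.
have e2 : p%:R - 2 * m%:R = 1 :> K by rewrite hm -addn1 natrD natrM addrC addKr.
apply/eqP; rewrite eq_le pabs_natr_le1 /=; rewrite real_leNgt ?num_real //.
apply/negP => h2.
have : abs (2 * m%:R) < 1.
  rewrite (pabs_mul HK); apply: le_lt_trans h2.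
  by rewrite ler_piMr ?(pabs_ge0 HK) ?pabs_natr_le1.
by move=> /(pabsB_lt pabs_p_lt1); rewrite e2 pabs1 ltxx.
Qed.

Lemma natr_neq0 n : (0 < n)%N -> n%:R != 0 :> K.
Proof. exact: (pchar0 HK). Qed.

Definition disc1 (t : K) := abs (t - 1) < 1.

Lemma disc1_abs t : disc1 t -> abs t = 1.
Proof. by move=> ht; rewrite -pabs1; apply: pabs_isosceles; rewrite pabs1. Qed.

Lemma disc1_neq0 t : disc1 t -> t != 0.
Proof. by move=> /disc1_abs ht; rewrite -pabs_eq0P ht oner_eq0. Qed.

Lemma disc1_1 : disc1 1.
Proof. by rewrite /disc1 subrr pabs0 ltr01. Qed.

Lemma disc1M t u : disc1 t -> disc1 u -> disc1 (t * u).
Proof.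
move=> ht hu; rewrite /disc1 (_ : t * u - 1 = t * (u - 1) + (t - 1)); last by ring.
by apply: pabsD_lt => //; rewrite (pabs_mul HK) disc1_abs // mul1r.
Qed.

Lemma disc1V t : disc1 t -> disc1 t^-1.
Proof.
move=> ht; rewrite /disc1 (_ : t^-1 - 1 = t^-1 * (1 - t)).
  by rewrite (pabs_mul HK) pabsV disc1_abs // invr1 mul1r pabs_subC.
by rewrite mulrBr mulr1 mulVf ?disc1_neq0.
Qed.

Lemma disc1X t n : disc1 t -> disc1 (t ^+ n).
Proof. by move=> ht; elim: n => [|n IH]; rewrite ?disc1_1 // exprS disc1M. Qed.

(* This is where p odd is needed: for p = 2, -1 lies in the disc. *)
Lemma disc1_add1_neq0 t : disc1 t -> 1 + t != 0.
Proof.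
move=> ht; apply: contraTneq ht => /(canRL (addKr 1)); rewrite addr0 => ->.
by rewrite /disc1 -opprD pabsN pabs2 ltxx.
Qed.

Lemma pabs_qnum_le1 t x : disc1 t -> abs (qnum t x) <= 1.
Proof.
move=> ht; rewrite qnumE; apply: pabs_sum_le => // i _.
by rewrite pabsX disc1_abs // expr1n.
Qed.

Notation cvg := (cvg_abs abs).

Lemma cvg_cst c : cvg (fun _ => c) c.
Proof. by move=> e e0; exists 0%N => n _; rewrite subrr pabs0. Qed.

Lemma eq_cvg u v L : u =1 v -> cvg u L -> cvg v L.
Proof. by move=> uv cu e /cu[N hN]; exists N => n /hN; rewrite uv. Qed.

Lemma cvgD u v L M : cvg u L -> cvg v M -> cvg (fun N => u N + v N) (L + M).
Proof.
move=> cu cv e e0; have [N1 h1] := cu e e0; have [N2 h2] := cv e e0.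
exists (maxn N1 N2) => n; rewrite geq_max => /andP[n1 n2].
by rewrite opprD addrACA; apply: pabsD_lt; [apply: h1 | apply: h2].
Qed.

Lemma cvgN u L : cvg u L -> cvg (fun N => - u N) (- L).
Proof. by move=> cu e /cu[N hN]; exists N => n /hN; rewrite -opprD pabsN. Qed.

Lemma cvgB u v L M : cvg u L -> cvg v M -> cvg (fun N => u N - v N) (L - M).
Proof. by move=> cu /cvgN; apply: cvgD. Qed.

Lemma cvgM u v L M : cvg u L -> cvg v M -> cvg (fun N => u N * v N) (L * M).
Proof.
move=> cu cv e e0.
have gL := pabs_ge0 HK L; have gM := pabs_ge0 HK M.
pose d := 1 + abs L + abs M.
have hLd : abs L <= d by rewrite /d; lra.
have hMd : abs M <= d by rewrite /d; lra.
have d1 : 1 <= d by rewrite /d; lra.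
pose dl := e / (d + e).
have dl0 : 0 < dl by rewrite divr_gt0 //; lra.
have dle : dl * (d + e) = e by rewrite /dl mulfVK // gt_eqF //; lra.
have [N1 h1] := cu _ dl0; have [N2 h2] := cv _ dl0.
exists (maxn N1 N2) => n; rewrite geq_max => /andP[/h1 hu /h2 hv].
rewrite (_ : u n * v n - L * M
             = (u n - L) * (v n - M) + (L * (v n - M) + (u n - L) * M)); last by ring.
have g1 := pabs_ge0 HK (u n - L); have g2 := pabs_ge0 HK (v n - M).
apply: pabsD_lt; first by rewrite (pabs_mul HK); nra.
by apply: pabsD_lt; rewrite (pabs_mul HK); nra.
Qed.

Lemma cvgX u L n : cvg u L -> cvg (fun N => u N ^+ n) (L ^+ n).
Proof.
move=> cu; elim: n => [|n IH]; first by apply: (eq_cvg _ (cvg_cst 1)).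
by rewrite exprSr; apply: (eq_cvg _ (cvgM IH cu)) => N; rewrite exprSr.
Qed.

Lemma cvgV u L : L != 0 -> cvg u L -> cvg (fun N => (u N)^-1) L^-1.
Proof.
move=> L0 cu e e0; have aL0 : 0 < abs L by rewrite pabs_gt0.
have [N1 h1] := cu _ aL0.
have [N2 h2] := cu _ (mulr_gt0 e0 (exprn_gt0 2 aL0)).
exists (maxn N1 N2) => n; rewrite geq_max => /andP[/h1 hu /h2 hv].
have au := pabs_isosceles hu.
have u0 : u n != 0 by rewrite -pabs_eq0P au pabs_eq0P.
rewrite (_ : (u n)^-1 - L^-1 = (L - u n) * ((u n)^-1 * L^-1)); last by field; rewrite u0 L0.
rewrite !(pabs_mul HK) !pabsV au pabs_subC -expr2 exprVn.
by rewrite ltr_pdivrMr // exprn_gt0.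
Qed.

Lemma cvg_uniq u L M : cvg u L -> cvg u M -> L = M.
Proof.
move=> cL cM; apply/eqP; rewrite -subr_eq0; apply: contraT; rewrite -pabs_gt0 => e0.
have [N1 h1] := cL _ e0; have [N2 h2] := cM _ e0; set N := maxn N1 N2.
have := pabsB_lt (h2 N (leq_maxr _ _)) (h1 N (leq_maxl _ _)).
by rewrite (_ : _ - _ = L - M) ?ltxx //; ring.
Qed.

Lemma lim_absE u L : cvg u L -> lim_abs abs u = L.
Proof. by move=> cu; apply: (cvg_uniq _ cu); apply: (epsilon_spec (inhabits 0) (cvg u)); exists L. Qed.

Lemma cvg_lim_abs u : (exists L, cvg u L) -> cvg u (lim_abs abs u).
Proof. by move=> [L cu]; rewrite (lim_absE cu). Qed.

Lemma cvg_sum n (u : 'I_n -> nat -> K) (L : 'I_n -> K) :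
  (forall i, cvg (u i) (L i)) ->
  cvg (fun N => \sum_(i < n) u i N) (\sum_(i < n) L i).
Proof.
elim: n u L => [|n IH] u L cu.
  by rewrite big_ord0; apply: (eq_cvg _ (cvg_cst 0)) => N; rewrite big_ord0.
rewrite big_ord_recr; apply: (eq_cvg _ (cvgD (IH _ _ (fun i => cu _)) (cu ord_max))) => N.
by rewrite big_ord_recr.
Qed.

Lemma cvg_horner (P : {poly K}) u x : cvg u x -> cvg (fun N => P.[u N]) P.[x].
Proof.
move=> cu; rewrite horner_coef.
apply: (eq_cvg _ (cvg_sum (fun i => cvgM (cvg_cst P`_i) (cvgX i cu)))) => N.
by rewrite horner_coef.
Qed.

Lemma cvg0_geometric (u : nat -> K) (C c : R) : 0 <= c -> c < 1 ->
  (forall N, abs (u N) <= C * c ^+ N) -> cvg u 0.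
Proof.
move=> c0 c1 hu e e0.
have C1 : 0 < `|C| + 1 by rewrite ltr_pwDr ?normr_ge0.
have [N hN] := exists_expr_lt c0 c1 (divr_gt0 e0 C1).
exists N => n hn; rewrite subr0; apply: le_lt_trans (hu n) _.
have : c ^+ n <= c ^+ N by rewrite ler_wiXn2l // ltW.
have : 0 <= c ^+ n by rewrite exprn_ge0.
have : C <= `|C| by rewrite ler_norm.
have : (`|C| + 1) * (e / (`|C| + 1)) = e by rewrite mulrC mulfVK // gt_eqF.
have : 0 <= `|C| by rewrite normr_ge0.
nra.
Qed.

Definition pratio (Q : K) := Num.max (abs p%:R) (abs (Q - 1)).

Lemma pratio_ge0 Q : 0 <= pratio Q.
Proof. by rewrite le_max (pabs_ge0 HK). Qed.

Lemma pratio_lt1 Q : disc1 Q -> pratio Q < 1.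
Proof. by rewrite gt_max pabs_p_lt1. Qed.

Lemma pabs_qnum_p t : disc1 t -> abs (qnum t p) <= pratio t.
Proof.
move=> ht; rewrite (_ : qnum t p = p%:R + \sum_(i < p) (t ^+ i - 1)); last first.
  by rewrite qnumE sumrB sumr_const card_ord addrC subrK.
apply: pabsD_le; first by rewrite le_max lexx.
apply: pabs_sum_le (pratio_ge0 t) _ => i _.
rewrite subrX1_qnum (pabs_mul HK); apply: le_trans (_ : abs (t - 1) * 1 <= _).
  by rewrite ler_wpM2l ?(pabs_ge0 HK) ?pabs_qnum_le1.
by rewrite mulr1 le_max lexx orbT.
Qed.

Lemma pabs_subX1_ppow Q N :
  disc1 Q -> abs (Q ^+ (p ^ N) - 1) <= pratio Q ^+ N * abs (Q - 1).
Proof.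
move=> hQ; elim: N => [|N IH]; first by rewrite expn0 expr1 mul1r.
rewrite expnSr exprM subrX1_qnum (pabs_mul HK); set t := Q ^+ (p ^ N) in IH *.
have cN : pratio Q ^+ N <= 1 by rewrite exprn_ile1 ?pratio_ge0 // ltW ?pratio_lt1.
have ht1 : abs (t - 1) <= abs (Q - 1).
  by apply: le_trans IH _; rewrite ler_piMl ?(pabs_ge0 HK).
have hp : abs (qnum t p) <= pratio Q.
  apply: le_trans (pabs_qnum_p (le_lt_trans ht1 hQ)) _.
  by rewrite ge_max !le_max lexx ht1 orbT.
have := pabs_ge0 HK (t - 1); have := pabs_ge0 HK (qnum t p).
have := pratio_ge0 Q; have : 0 <= pratio Q ^+ N by rewrite exprn_ge0 ?pratio_ge0.
rewrite exprSr; nra.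
Qed.

Lemma cvg_expr_ppow Q : disc1 Q -> cvg (fun N => Q ^+ (p ^ N)) 1.
Proof.
move=> hQ; have : cvg (fun N => Q ^+ (p ^ N) - 1) 0.
  apply: (cvg0_geometric (pratio_ge0 Q) (pratio_lt1 hQ)) => N.
  by rewrite mulrC; apply: pabs_subX1_ppow.
move/cvgD/(_ (cvg_cst 1)); rewrite add0r; apply: eq_cvg => N.
by rewrite subrK.
Qed.

Lemma cvg_qnum_ppow Q : disc1 Q -> cvg (fun N => qnum Q (p ^ N)) 0.
Proof.
move=> hQ; apply: (cvg0_geometric (C := 1) (pratio_ge0 Q) (pratio_lt1 hQ)) => N.
rewrite mul1r; have [->|Q1] := eqVneq Q 1.
  by rewrite /qnum eqxx natrX pabsX lerXn2r ?nnegrE ?(pabs_ge0 HK) ?pratio_ge0 ?le_max ?lexx.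
have hQ1 : 0 < abs (Q - 1) by rewrite pabs_gt0 subr_eq0.
by rewrite -(ler_pM2r hQ1) -(pabs_mul HK) mulrC -subrX1_qnum pabs_subX1_ppow.
Qed.

(* [fqint abs p r f] is by definition [lim_abs abs (fqsum r f)]. *)
Definition fqsum (r : K) (f : nat -> K) (N : nat) : K :=
  (\sum_(xi < p ^ N) f xi * (- r) ^+ xi) / ((1 + r ^+ (p ^ N)) / (1 + r)).

Lemma eq_fqsum r f g N : f =1 g -> fqsum r f N = fqsum r g N.
Proof. by move=> fg; rewrite /fqsum; under eq_bigr do rewrite fg. Qed.

Lemma fqsum_lin r a f g N :
  fqsum r (fun x => a * f x + g x) N = a * fqsum r f N + fqsum r g N.
Proof.
rewrite /fqsum mulrA -mulrDl mulr_sumr -big_split /=.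
by congr (_ * _); apply: eq_bigr => x _; ring.
Qed.

Lemma fqsum_comb r n (c : 'I_n -> K) (f : 'I_n -> nat -> K) N :
  fqsum r (fun x => \sum_(i < n) c i * f i x) N = \sum_(i < n) c i * fqsum r (f i) N.
Proof.
rewrite /fqsum; under eq_bigr do rewrite mulr_suml.
rewrite exchange_big /= mulr_suml; apply: eq_bigr => i _.
by rewrite mulrA mulr_sumr !mulr_suml; apply: eq_bigr => x _; ring.
Qed.

(* Telescoping over an odd number p^N of terms, where (-r)^(p^N) = -r^(p^N). *)
Lemma fqsum_shift r f N :
  r * fqsum r (fun x => f x.+1) N + fqsum r f N
  = (f 0%N + r ^+ (p ^ N) * f (p ^ N)%N) / ((1 + r ^+ (p ^ N)) / (1 + r)).
Proof.
rewrite /fqsum mulrA -mulrDl; congr (_ * _); set M := (p ^ N)%N.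
have eM : (- r) ^+ M = - r ^+ M by rewrite exprNn -signr_odd oddX Hodd orbT mulN1r.
have e1 : \sum_(i < M.+1) f i * (- r) ^+ i
          = f 0%N - r * \sum_(i < M) f i.+1 * (- r) ^+ i.
  rewrite big_ord_recl expr0 mulr1 mulr_sumr -sumrN.
  by congr (_ + _); apply: eq_bigr => i _; rewrite exprS; ring.
have := e1; rewrite big_ord_recr /= eM => e2.
have -> : r * \sum_(i < M) f i.+1 * (- r) ^+ i
          = f 0%N - (\sum_(i < M) f i * (- r) ^+ i + f M * - r ^+ M).
  by rewrite e2; ring.
ring.
Qed.

Lemma cvg_fqsum_boundary r f : disc1 r -> cvg (fun N => f (p ^ N)%N) (f 0%N) ->
  cvg (fun N => (f 0%N + r ^+ (p ^ N) * f (p ^ N)%N) / ((1 + r ^+ (p ^ N)) / (1 + r)))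
      ((1 + r) * f 0%N).
Proof.
move=> hr cf; have r1 := disc1_add1_neq0 hr.
have two0 : 2 != 0 :> K by apply: natr_neq0.
have c1 := cvgD (cvg_cst (f 0%N)) (cvgM (cvg_expr_ppow hr) cf).
have c2 := cvgM (cvgD (cvg_cst 1) (cvg_expr_ppow hr)) (cvg_cst (1 + r)^-1).
have c3 := cvgV (mulf_neq0 two0 (invr_neq0 r1)) c2.
rewrite (_ : (1 + r) * f 0%N = (f 0%N + 1 * f 0%N) / ((1 + 1) / (1 + r))).
  exact: cvgM c1 c3.
by field; rewrite r1 two0.
Qed.

Section QPolyIntegral.
Variables (r s Q : K).
Hypotheses (hr : disc1 r) (hs : disc1 s) (hQ : disc1 Q).

Definition qpoly_fun (P : {poly K}) (x : nat) : K := s ^+ x * P.[qnum Q x].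

Definition qpoly_int (P : {poly K}) : K := fqint abs p r (qpoly_fun P).

Lemma qpoly_fun0 P : qpoly_fun P 0 = P.[0].
Proof. by rewrite /qpoly_fun expr0 mul1r qnum0. Qed.

Lemma cvg_qpoly_fun_ppow P : cvg (fun N => qpoly_fun P (p ^ N)%N) (qpoly_fun P 0).
Proof.
rewrite qpoly_fun0 -[P.[0]]mul1r.
exact: cvgM (cvg_expr_ppow hs) (cvg_horner P (cvg_qnum_ppow hQ)).
Qed.

Lemma qpoly_fun_shift P x :
  qpoly_fun (s *: (P \Po (Q *: 'X + 1))) x = qpoly_fun P x.+1.
Proof.
rewrite /qpoly_fun hornerZ horner_comp hornerD hornerZ hornerX hornerC qnumS.
by rewrite exprS [1 + _]addrC; ring.
Qed.

Lemma qpoly_fun_coef P x : qpoly_fun P x = \sum_(i < size P) P`_i * qpoly_fun 'X^i x.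
Proof.
rewrite /qpoly_fun horner_coef mulr_sumr; apply: eq_bigr => i _.
by rewrite hornerXn mulrCA.
Qed.

(* The shift identity solved for the top monomial: the limit exists by
   strong induction on the degree. *)
Lemma cvg_fqsum_monomial j : exists L, cvg (fqsum r (qpoly_fun 'X^j)) L.
Proof.
elim/ltn_ind: j => j IH.
pose c (i : 'I_j.+1) : K := s * (Q ^+ i * 'C(j, i)%:R).
pose c' (i : 'I_j) := c (widen_ord (leqnSn j) i).
have hshift x : qpoly_fun 'X^j x.+1 = \sum_(i < j.+1) c i * qpoly_fun 'X^i x.
  rewrite /qpoly_fun hornerXn qnumS addrC exprD1n exprS -mulrA !mulr_sumr.
  by apply: eq_bigr => i _; rewrite hornerXn /c exprMn -mulr_natr; ring.
have diag : 1 + r * s * Q ^+ j != 0 by rewrite disc1_add1_neq0 ?disc1M ?disc1X.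
have hsolve N : fqsum r (qpoly_fun 'X^j) N
   = ((qpoly_fun 'X^j 0%N + r ^+ (p ^ N) * qpoly_fun 'X^j (p ^ N)%N)
        / ((1 + r ^+ (p ^ N)) / (1 + r))
      - r * \sum_(i < j) c' i * fqsum r (qpoly_fun 'X^i) N) / (1 + r * s * Q ^+ j).
  rewrite -fqsum_shift (eq_fqsum _ _ hshift) fqsum_comb big_ord_recr /=.
  by rewrite /c /= binn mulr1; field.
eexists; apply: (eq_cvg (fun N => esym (hsolve N))).
apply: cvgM (cvg_cst _); apply: cvgB (cvg_fqsum_boundary hr (cvg_qpoly_fun_ppow _)) _.
apply: cvgM (cvg_cst _) _.
apply: (@cvg_sum j (fun i N => c' i * fqsum r (qpoly_fun 'X^i) N)) => i.
by apply: cvgM (cvg_cst _) _; apply/cvg_lim_abs/IH.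
Qed.

Lemma cvg_fqsum_qpoly P : cvg (fqsum r (qpoly_fun P)) (qpoly_int P).
Proof.
apply: cvg_lim_abs.
exists (\sum_(i < size P) P`_i * lim_abs abs (fqsum r (qpoly_fun 'X^i))).
apply: (eq_cvg (fun N => esym (eq_fqsum r N (qpoly_fun_coef P)))).
apply: (eq_cvg (fun N => esym (fqsum_comb r (fun i => P`_i) (fun i => qpoly_fun 'X^i) N))).
apply: (@cvg_sum (size P) (fun i N => P`_i * fqsum r (qpoly_fun 'X^i) N)) => i.
by apply: cvgM (cvg_cst _) _; apply/cvg_lim_abs/cvg_fqsum_monomial.
Qed.

Lemma eq_qpoly_int P P' : (forall x, P.[x] = P'.[x]) -> qpoly_int P = qpoly_int P'.
Proof.
move=> PP'; apply/esym/lim_absE; apply: (eq_cvg _ (cvg_fqsum_qpoly P)) => N.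
by apply: eq_fqsum => x; rewrite /qpoly_fun PP'.
Qed.

Lemma qpoly_int_lin a P P' :
  qpoly_int (a *: P + P') = a * qpoly_int P + qpoly_int P'.
Proof.
apply: lim_absE.
apply: (eq_cvg _ (cvgD (cvgM (cvg_cst a) (cvg_fqsum_qpoly P)) (cvg_fqsum_qpoly P'))) => N.
rewrite -fqsum_lin; apply: eq_fqsum => x; rewrite /qpoly_fun hornerD hornerZ; ring.
Qed.

Lemma qpoly_int_shift P :
  r * qpoly_int (s *: (P \Po (Q *: 'X + 1))) + qpoly_int P = (1 + r) * P.[0].
Proof.
have := cvgD (cvgM (cvg_cst r) (cvg_fqsum_qpoly (s *: (P \Po (Q *: 'X + 1)))))
  (cvg_fqsum_qpoly P).
move/cvg_uniq; apply; rewrite -qpoly_fun0.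
apply: (eq_cvg _ (cvg_fqsum_boundary hr (cvg_qpoly_fun_ppow P))) => N.
by rewrite -fqsum_shift (eq_fqsum _ _ (qpoly_fun_shift P)).
Qed.

End QPolyIntegral.

Lemma Gtilde_qpoly_int q alpha h m :
  Gtilde abs p q alpha h m.+1 / m.+1%:R = qpoly_int q (q ^+ (h - 1)) (q ^+ alpha) 'X^m.
Proof.
rewrite /Gtilde mulrC mulKf ?natr_neq0 //; congr fqint.
by apply: functional_extensionality => x; rewrite /qpoly_fun hornerXn exprM.
Qed.

Section Reflection.
Variables (q : K) (alpha h : nat).
Hypotheses (hq : disc1 q) (hh : (0 < h)%N).

Let s := q ^+ (h - 1).
Let Q := q ^+ alpha.
Let L := qpoly_int q s Q.
Let L' := qpoly_int q^-1 s^-1 Q^-1.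

Let q0 : q != 0. Proof. exact: disc1_neq0. Qed.
Let s0 : s != 0. Proof. exact/disc1_neq0/disc1X. Qed.
Let hs : disc1 s. Proof. exact: disc1X. Qed.
Let hQ : disc1 Q. Proof. exact: disc1X. Qed.
Let hqV : disc1 q^-1. Proof. exact: disc1V. Qed.
Let hsV : disc1 s^-1. Proof. exact/disc1V/disc1X. Qed.
Let hQV : disc1 Q^-1. Proof. exact/disc1V/disc1X. Qed.

Let L_lin a P P' : L (a *: P + P') = a * L P + L P'.
Proof. exact: qpoly_int_lin. Qed.
Let L_ext P P' : (forall x, P.[x] = P'.[x]) -> L P = L P'.
Proof. exact: eq_qpoly_int. Qed.
Let L_shift P : q * L (s *: (P \Po (Q *: 'X + 1))) + L P = (1 + q) * P.[0].
Proof. exact: qpoly_int_shift. Qed.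
Let L'_lin a P P' : L' (a *: P + P') = a * L' P + L' P'.
Proof. exact: qpoly_int_lin. Qed.
Let L'_ext P P' : (forall x, P.[x] = P'.[x]) -> L' P = L' P'.
Proof. exact: eq_qpoly_int. Qed.
Let L'_shift P :
  q^-1 * L' (s^-1 *: (P \Po (Q^-1 *: 'X + 1))) + L' P = (1 + q^-1) * P.[0].
Proof. exact: qpoly_int_shift. Qed.

Let reflect_defect (P : {poly K}) :=
  L P - ((1 + q) * P.[0] - q * L' (P \Po (- Q^-1 *: 'X))).

Let reflect_defect_lin a P P' :
  reflect_defect (a *: P + P') = a * reflect_defect P + reflect_defect P'.
Proof.
rewrite /reflect_defect L_lin.
rewrite (L'_ext (P' := a *: (P \Po (- Q^-1 *: 'X)) + (P' \Po (- Q^-1 *: 'X)))).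
  by rewrite L'_lin !(hornerD, hornerZ); ring.
by move=> x; rewrite !(hornerD, hornerZ, horner_comp).
Qed.

Let reflect_defect_ext P P' :
  (forall x, P.[x] = P'.[x]) -> reflect_defect P = reflect_defect P'.
Proof.
move=> PP'; rewrite /reflect_defect (L_ext PP') PP'.
by congr (_ - (_ - _ * _)); apply: L'_ext => x; rewrite !horner_comp PP'.
Qed.

(* The substitution x -> 1 - x turns the shift of L into the shift of L'. *)
Let reflect_defect_shift P :
  q * reflect_defect (s *: (P \Po (Q *: 'X + 1))) + reflect_defect P = 0.
Proof.
pose P1 := P \Po (1 - 'X).
have hL : q * L (s *: (P \Po (Q *: 'X + 1))) = (1 + q) * P.[0] - L P.
  by rewrite -(L_shift P) addrK.
have hL'P1 : q^-1 * (s^-1 * L' (P \Po (- Q^-1 *: 'X))) + L' P1 = (1 + q^-1) * P.[1].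
  have := L'_shift P1.
  rewrite (_ : P1.[0] = P.[1]); last by rewrite /P1 !(hornerE, horner_comp) subr0.
  move=> <-; congr (_ + _); rewrite -(lin_funZ L'_lin); congr (_ * _).
  by apply: L'_ext => x; rewrite /P1 !(hornerE, horner_comp); congr (_ * P.[_]); ring.
have hP1 : L' ((s *: (P \Po (Q *: 'X + 1))) \Po (- Q^-1 *: 'X)) = s * L' P1.
  rewrite -(lin_funZ L'_lin); apply: L'_ext => x.
  rewrite !(hornerZ, horner_comp, hornerD, hornerN, hornerX, hornerC).
  by congr (_ * P.[_]); field; apply: disc1_neq0.
rewrite /reflect_defect mulrBr hL hP1.
rewrite !(hornerZ, horner_comp, hornerD, hornerX, hornerC) mulr0 add0r.
have hL' : q * L' (P \Po (- Q^-1 *: 'X)) = q ^+ 2 * s * ((1 + q^-1) * P.[1] - L' P1).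
  by rewrite -hL'P1 addrK; field; rewrite q0 s0.
rewrite hL'; field; exact: q0.
Qed.

Lemma qpoly_int_reflect P :
  L P = (1 + q) * P.[0] - q * L' (P \Po (- Q^-1 *: 'X)).
Proof.
apply/eqP; rewrite -subr_eq0; apply/eqP.
apply: (shift_annihilated_eq0 reflect_defect_lin reflect_defect_ext reflect_defect_shift).
by move=> j; rewrite disc1_add1_neq0 ?disc1M ?disc1X.
Qed.

(* h > 0 makes q^(h+1) = q^2 * q^(h-1); the subtraction h - 1 is truncated. *)
Lemma qpoly_int_oneBX_pow j :
  (0 < j)%N -> L ((1 - 'X) ^+ j) = (1 + q) + q ^+ (h + 1) * L' 'X^j.
Proof.
move=> j0; rewrite qpoly_int_reflect.
rewrite horner_exp hornerD hornerN hornerX hornerC subr0 expr1n mulr1.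
have := L'_shift 'X^j; rewrite hornerXn expr0n (gtn_eqF j0) mulr0.
rewrite (L'_ext (P' := s^-1 *: ((1 - 'X) ^+ j \Po (- Q^-1 *: 'X)))); last first.
  move=> x; rewrite !(hornerZ, horner_comp, hornerD, hornerN, hornerX, hornerC).
  by rewrite hornerXn horner_exp hornerD hornerN hornerX hornerC; congr (_ * _ ^+ _); ring.
rewrite lin_funZ // => hj.
set Y := L' ((1 - 'X) ^+ j \Po _) in hj *.
have -> : Y = q * s * (q^-1 * (s^-1 * Y) + L' 'X^j) - q * s * L' 'X^j.
  by field; rewrite q0 s0.
rewrite hj mulr0 sub0r.
rewrite (_ : q ^+ (h + 1) = q ^+ 2 * s); last by rewrite /s -exprD; congr (_ ^+ _); lia.
ring.
Qed.

Lemma Gtilde_binomial_sum n k : (k < n)%N ->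
  \sum_(l < (n - k).+1)
     ('C(n - k, l)%:R * (-1) ^+ l
      * (Gtilde abs p q alpha h (l + k + 1) / (l + k + 1)%:R))
  = \sum_(l < k.+1)
        ('C(k, l)%:R * (-1) ^+ (k + l)
         * ((1 + q) + q ^+ (h + 1)
              * (Gtilde abs p q^-1 alpha h (n - l + 1) / (n - l + 1)%:R))).
Proof.
move=> kn; set m := (n - k)%N.
have m0 : (0 < m)%N by rewrite subn_gt0.
under eq_bigr do rewrite addn1 Gtilde_qpoly_int -/s -/Q -/L.
rewrite -(lin_fun_comb L_lin L_ext (P := 'X^k * (1 - 'X) ^+ m)); last first.
  move=> x; rewrite hornerM hornerXn horner_exp hornerD hornerN hornerX hornerC.
  rewrite [1 - x]addrC exprD1n mulr_sumr; apply: eq_bigr => l _.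
  by rewrite hornerXn exprD -mulr_natr [(- x) ^+ _]exprNn; ring.
rewrite (lin_fun_comb L_lin L_ext (c := fun l : 'I_k.+1 => 'C(k, l)%:R * (-1) ^+ l)
           (Ps := fun l : 'I_k.+1 => (1 - 'X) ^+ (l + m))); last first.
  move=> x; rewrite hornerM hornerXn horner_exp hornerD hornerN hornerX hornerC.
  rewrite {1}(_ : x = - (1 - x) + 1); last by rewrite opprB subrK.
  rewrite exprD1n mulr_suml; apply: eq_bigr => l _.
  rewrite horner_exp hornerD hornerN hornerX hornerC (exprNn (1 - x)) exprD -mulr_natr.
  ring.
rewrite (reindex_inj rev_ord_inj); apply: eq_bigr => i _ /=.
have hi : (i <= k)%N by rewrite -ltnS.
rewrite subSS qpoly_int_oneBX_pow ?addn_gt0 ?m0 ?orbT //.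
rewrite bin_sub // -signr_odd oddB // -oddD signr_odd.
rewrite (_ : (k - i + m)%N = (n - i)%N); last by rewrite /m; lia.
by rewrite [(n - i + 1)%N]addn1 Gtilde_qpoly_int !exprVn.
Qed.

End Reflection.
End PadicAnalysis.

Unset Implicit Arguments.

Theorem mainTheorem6 (K : closedFieldType) (R : realType) (p : nat)
  (abs : K -> R) (HK : padic_abs p abs)
  (Hp : prime p) (Hodd : odd p)
  (q : K) (Hq : abs (q - 1) < 1)
  (alpha h : nat) (Hh : (0 < h)%N) (n k : nat) (Hkn : (k < n)%N) :
  \sum_(l < (n - k).+1)
     ('C(n - k, l)%:R * (-1) ^+ l
      * (Gtilde abs p q alpha h (l + k + 1) / (l + k + 1)%:R))
  = if k == 0%N then
      (1 + q) + q ^+ (h + 1)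
                * (Gtilde abs p q^-1 alpha h (n + 1) / (n + 1)%:R)
    else
      \sum_(l < k.+1)
        ('C(k, l)%:R * (-1) ^+ (k + l)
         * ((1 + q) + q ^+ (h + 1)
              * (Gtilde abs p q^-1 alpha h (n - l + 1) / (n - l + 1)%:R))).
Proof.
rewrite (Gtilde_binomial_sum HK Hp Hodd alpha Hq Hh Hkn).
case: eqP => [k0|//]; subst k.
by rewrite big_ord1 /= bin0 expr0 mul1r subn0 mul1r.
Qed.
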